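(* Let $\mathcal{C}$ be a rigid abelian monoidal category whose unit object $\mathbbm{1}$ is simple. Let $A$ be a non-zero algebra in $\mathcal{C}$ which admits a simple left (resp. right) $A$-module in $\mathcal{C}$. If $A$ is a left (resp. right) essential division algebra in $\mathcal{C}$, then $A$ is a left (resp. right) simplistic division algebra in $\mathcal{C}$.
   Context: An abelian monoidal category is a monoidal category whose underlying category is abelian and whose functors $(X\otimes-)$, $(-\otimes X)$ are additive; rigid means every object has left and right duals. For an algebra $A$ in $\mathcal{C}$, $A\text{-}\mathsf{Mod}(\mathcal{C})$ and $\mathsf{Mod}\text{-}A(\mathcal{C})$ denote the categories of left and right $A$-modules in $\mathcal{C}$; a module is simple if it is a simple object of the corresponding module category. A non-zero algebra $A$ is a left (resp. right) simplistic division algebra if the regular module $(A,m_A)$ is simple in $A\text{-}\mathsf{Mod}(\mathcal{C})$ (resp. $\mathsf{Mod}\text{-}A(\mathcal{C})$). A non-zero algebra $A$ is a left (resp. right) essential division algebra if the free module functor $(A\otimes -):\mathcal{C}\to A\text{-}\mathsf{Mod}(\mathcal{C})$, $X\mapsto (A\otimes X, m_A\otimes \mathrm{id}_X)$ (resp. $(-\otimes A):\mathcal{C}\to\mathsf{Mod}\text{-}A(\mathcal{C})$, $X\mapsto (X\otimes A,\mathrm{id}_X\otimes m_A)$) is essentially surjective. *)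

From HB Require Import structures.
From mathcomp Require Import all_boot all_algebra.
Import GRing.Theory.
Local Open Scope ring_scope.

(** * Data of a (preadditive) monoidal category.
    Hom-sets are Z-modules (abelian groups); morphism equality is Leibniz. *)
Record MonCat := {
  Ob : Type;
  Hom : Ob -> Ob -> zmodType;
  idm : forall a, Hom a a;
  comp : forall a b c, Hom b c -> Hom a b -> Hom a c;
  tens : Ob -> Ob -> Ob;
  tensh : forall a b c d, Hom a b -> Hom c d -> Hom (tens a c) (tens b d);
  unitO : Ob;
  assoc : forall a b c, Hom (tens (tens a b) c) (tens a (tens b c));
  associnv : forall a b c, Hom (tens a (tens b c)) (tens (tens a b) c);
  lunit : forall a, Hom (tens unitO a) a;
  lunitinv : forall a, Hom a (tens unitO a);
  runit : forall a, Hom (tens a unitO) a;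
  runitinv : forall a, Hom a (tens a unitO)
}.

Arguments Hom {m}.
Arguments idm {m}.
Arguments comp {m a b c}.
Arguments tens {m}.
Arguments tensh {m a b c d}.
Arguments unitO {m}.
Arguments assoc {m}.
Arguments associnv {m}.
Arguments lunit {m}.
Arguments lunitinv {m}.
Arguments runit {m}.
Arguments runitinv {m}.

Notation "g \oc f" := (comp g f) (at level 40, left associativity).

Section CatDefs.
Variable C : MonCat.
Implicit Types (a b c d k q x z X L R S : Ob C).

Definition is_preadditive_category : Prop :=
  (forall a b (f : Hom a b), idm b \oc f = f) /\
  (forall a b (f : Hom a b), f \oc idm a = f) /\
  (forall a b c d (h : Hom c d) (g : Hom b c) (f : Hom a b),
      h \oc (g \oc f) = (h \oc g) \oc f) /\
  (forall a b c (g g' : Hom b c) (f : Hom a b),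
      (g + g') \oc f = g \oc f + g' \oc f) /\
  (forall a b c (g : Hom b c) (f f' : Hom a b),
      g \oc (f + f') = g \oc f + g \oc f').

(** zero object (in a preadditive category: identity is zero) *)
Definition is_zero_obj (z : Ob C) : Prop := idm z = 0.

Definition is_mono {a b : Ob C} (m : Hom a b) : Prop :=
  forall x (g h : Hom x a), m \oc g = m \oc h -> g = h.
Definition is_epi {a b : Ob C} (e : Hom a b) : Prop :=
  forall x (g h : Hom b x), g \oc e = h \oc e -> g = h.
Definition is_iso {a b : Ob C} (f : Hom a b) : Prop :=
  exists g : Hom b a, g \oc f = idm a /\ f \oc g = idm b.

Definition is_kernel {k a b : Ob C} (i : Hom k a) (f : Hom a b) : Prop :=
  f \oc i = 0 /\
  forall x (g : Hom x a), f \oc g = 0 -> exists! h : Hom x k, i \oc h = g.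
Definition is_cokernel {a b q : Ob C} (p : Hom b q) (f : Hom a b) : Prop :=
  p \oc f = 0 /\
  forall x (g : Hom b x), g \oc f = 0 -> exists! h : Hom q x, h \oc p = g.

Definition is_abelian : Prop :=
  is_preadditive_category /\
  (exists z : Ob C, is_zero_obj z) /\
  (forall a b : Ob C, exists (c : Ob C) (i1 : Hom a c) (i2 : Hom b c)
      (p1 : Hom c a) (p2 : Hom c b),
      p1 \oc i1 = idm a /\ p2 \oc i2 = idm b /\ p1 \oc i2 = 0 /\
      p2 \oc i1 = 0 /\ i1 \oc p1 + i2 \oc p2 = idm c) /\
  (forall a b (f : Hom a b), exists k (i : Hom k a), is_kernel i f) /\
  (forall a b (f : Hom a b), exists q (p : Hom b q), is_cokernel p f) /\
  (forall a b (m : Hom a b), is_mono m -> exists c (f : Hom b c), is_kernel m f) /\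
  (forall a b (e : Hom a b), is_epi e -> exists c (f : Hom c a), is_cokernel e f).

Definition is_monoidal : Prop :=
  (forall a b : Ob C, tensh (idm a) (idm b) = idm (tens a b)) /\
  (forall a b c a' b' c' (f : Hom a b) (f' : Hom b c) (g : Hom a' b') (g' : Hom b' c'),
      tensh (f' \oc f) (g' \oc g) = tensh f' g' \oc tensh f g) /\
  (forall a b c : Ob C, assoc a b c \oc associnv a b c = idm _ /\
                        associnv a b c \oc assoc a b c = idm _) /\
  (forall a : Ob C, lunit a \oc lunitinv a = idm _ /\ lunitinv a \oc lunit a = idm _) /\
  (forall a : Ob C, runit a \oc runitinv a = idm _ /\ runitinv a \oc runit a = idm _) /\
  (forall a b c a' b' c' (f : Hom a a') (g : Hom b b') (h : Hom c c'),
      assoc a' b' c' \oc tensh (tensh f g) h = tensh f (tensh g h) \oc assoc a b c) /\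
  (forall a b (f : Hom a b), lunit b \oc tensh (idm unitO) f = f \oc lunit a) /\
  (forall a b (f : Hom a b), runit b \oc tensh f (idm unitO) = f \oc runit a) /\
  (forall a b c d : Ob C,
      tensh (idm a) (assoc b c d) \oc assoc a (tens b c) d \oc tensh (assoc a b c) (idm d)
      = assoc a b (tens c d) \oc assoc (tens a b) c d) /\
  (forall a b : Ob C,
      tensh (idm a) (lunit b) \oc assoc a unitO b = tensh (runit a) (idm b)).

Definition tensor_additive : Prop :=
  (forall x a b (f g : Hom a b),
      tensh (idm x) (f + g) = tensh (idm x) f + tensh (idm x) g) /\
  (forall x a b (f g : Hom a b),
      tensh (f + g) (idm x) = tensh f (idm x) + tensh g (idm x)).

(** L is a (left) dual of R: ev : L ⊗ R -> 1, coev : 1 -> R ⊗ L, zigzag identities *)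
Definition dual_pair (L R : Ob C) (ev : Hom (tens L R) unitO)
    (coev : Hom unitO (tens R L)) : Prop :=
  runit R \oc tensh (idm R) ev \oc assoc R L R \oc tensh coev (idm R) \oc lunitinv R
    = idm R /\
  lunit L \oc tensh ev (idm L) \oc associnv L R L \oc tensh (idm L) coev \oc runitinv L
    = idm L.

Definition is_rigid : Prop :=
  forall X : Ob C,
    (exists L ev coev, dual_pair L X ev coev) /\
    (exists R ev coev, dual_pair X R ev coev).

Definition rigid_abelian_monoidal : Prop :=
  is_abelian /\ is_monoidal /\ tensor_additive /\ is_rigid.

Definition simple_obj (X : Ob C) : Prop :=
  ~ is_zero_obj X /\
  forall S (i : Hom S X), is_mono i -> is_zero_obj S \/ is_iso i.

Record Alg := { alg_obj : Ob C;
                alg_mul : Hom (tens alg_obj alg_obj) alg_obj;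
                alg_unit : Hom unitO alg_obj }.

Definition is_algebra (A : Alg) : Prop :=
  let m := alg_mul A in let u := alg_unit A in let a := alg_obj A in
  m \oc tensh m (idm a) = m \oc tensh (idm a) m \oc assoc a a a /\
  m \oc tensh u (idm a) = lunit a /\
  m \oc tensh (idm a) u = runit a.

Variable A : Alg.
Let a := alg_obj A.
Let m := alg_mul A.
Let u := alg_unit A.

Record LMod := { lm_obj : Ob C; lm_act : Hom (tens a lm_obj) lm_obj }.

Definition is_lmod (M : LMod) : Prop :=
  lm_act M \oc tensh m (idm (lm_obj M))
    = lm_act M \oc tensh (idm a) (lm_act M) \oc assoc a a (lm_obj M) /\
  lm_act M \oc tensh u (idm (lm_obj M)) = lunit (lm_obj M).

Definition lmod_hom (M N : LMod) (f : Hom (lm_obj M) (lm_obj N)) : Prop :=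
  f \oc lm_act M = lm_act N \oc tensh (idm a) f.

Definition lmod_mono (M N : LMod) (i : Hom (lm_obj M) (lm_obj N)) : Prop :=
  forall P : LMod, is_lmod P ->
  forall g h : Hom (lm_obj P) (lm_obj M),
    lmod_hom P M g -> lmod_hom P M h -> i \oc g = i \oc h -> g = h.

Definition lmod_iso (M N : LMod) (f : Hom (lm_obj M) (lm_obj N)) : Prop :=
  exists g : Hom (lm_obj N) (lm_obj M),
    lmod_hom N M g /\ g \oc f = idm _ /\ f \oc g = idm _.

Definition lmod_zero (M : LMod) : Prop := idm (lm_obj M) = 0.

Definition simple_lmod (M : LMod) : Prop :=
  is_lmod M /\ ~ lmod_zero M /\
  forall N : LMod, is_lmod N ->
  forall i : Hom (lm_obj N) (lm_obj M),
    lmod_hom N M i -> lmod_mono N M i -> lmod_zero N \/ lmod_iso N M i.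

Definition regular_lmod : LMod := {| lm_obj := a; lm_act := m |}.

(** free module (A ⊗ X, m_A ⊗ id_X) (associator made explicit) *)
Definition free_lmod (X : Ob C) : LMod :=
  {| lm_obj := tens a X; lm_act := tensh m (idm X) \oc associnv a a X |}.

Definition left_essential_division : Prop :=
  ~ is_zero_obj a /\
  forall M : LMod, is_lmod M ->
    exists (X : Ob C) (f : Hom (lm_obj (free_lmod X)) (lm_obj M)),
      lmod_hom (free_lmod X) M f /\ lmod_iso (free_lmod X) M f.

Definition left_simplistic_division : Prop :=
  ~ is_zero_obj a /\ simple_lmod regular_lmod.

Record RMod := { rm_obj : Ob C; rm_act : Hom (tens rm_obj a) rm_obj }.

Definition is_rmod (M : RMod) : Prop :=
  rm_act M \oc tensh (rm_act M) (idm a)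
    = rm_act M \oc tensh (idm (rm_obj M)) m \oc assoc (rm_obj M) a a /\
  rm_act M \oc tensh (idm (rm_obj M)) u = runit (rm_obj M).

Definition rmod_hom (M N : RMod) (f : Hom (rm_obj M) (rm_obj N)) : Prop :=
  f \oc rm_act M = rm_act N \oc tensh f (idm a).

Definition rmod_mono (M N : RMod) (i : Hom (rm_obj M) (rm_obj N)) : Prop :=
  forall P : RMod, is_rmod P ->
  forall g h : Hom (rm_obj P) (rm_obj M),
    rmod_hom P M g -> rmod_hom P M h -> i \oc g = i \oc h -> g = h.

Definition rmod_iso (M N : RMod) (f : Hom (rm_obj M) (rm_obj N)) : Prop :=
  exists g : Hom (rm_obj N) (rm_obj M),
    rmod_hom N M g /\ g \oc f = idm _ /\ f \oc g = idm _.

Definition rmod_zero (M : RMod) : Prop := idm (rm_obj M) = 0.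

Definition simple_rmod (M : RMod) : Prop :=
  is_rmod M /\ ~ rmod_zero M /\
  forall N : RMod, is_rmod N ->
  forall i : Hom (rm_obj N) (rm_obj M),
    rmod_hom N M i -> rmod_mono N M i -> rmod_zero N \/ rmod_iso N M i.

Definition regular_rmod : RMod := {| rm_obj := a; rm_act := m |}.

Definition free_rmod (X : Ob C) : RMod :=
  {| rm_obj := tens X a; rm_act := tensh (idm X) m \oc assoc X a a |}.

Definition right_essential_division : Prop :=
  ~ is_zero_obj a /\
  forall M : RMod, is_rmod M ->
    exists (X : Ob C) (f : Hom (rm_obj (free_rmod X)) (rm_obj M)),
      rmod_hom (free_rmod X) M f /\ rmod_iso (free_rmod X) M f.

Definition right_simplistic_division : Prop :=
  ~ is_zero_obj a /\ simple_rmod regular_rmod.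

End CatDefs.

(* Let i : N -> A be a submodule of the regular module and M a simple module.
   As A is an essential division algebra, M is isomorphic to a free module
   A ⊗ X, and X is nonzero.  Since X has a dual, - ⊗ X has a left adjoint and
   so preserves monomorphisms; hence N ⊗ X -> A ⊗ X ~ M is a submodule of M,
   so N ⊗ X is zero or i ⊗ X is an isomorphism.  Since the unit object is
   simple, a nonzero coevaluation 1 -> X ⊗ X^* is a monomorphism, and this
   makes - ⊗ X faithful.  Thus N = 0 in the first case; in the second, i is
   an epimorphism because i ⊗ X is, hence an isomorphism.  Right modules over
   A are left modules over A for the reversed tensor product. *)

From mathcomp Require Import all_boot all_algebra.
Import GRing.Theory.
Local Open Scope ring_scope.
Set Implicit Arguments.
Unset Strict Implicit.

(* The structure axioms are found by instance resolution, so that every lemma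
   below applies verbatim to the reversed category [rev C]. *)
Existing Class is_preadditive_category.
Existing Class is_monoidal.
Existing Class tensor_additive.
Existing Class is_abelian.
Existing Class is_rigid.

Local Notation "f ⊗ g" := (tensh f g) (at level 35, no associativity).

Section Preadditive.
Context {C : MonCat} {HP : is_preadditive_category C}.
Implicit Types (a b c d x : Ob C).

Lemma comp1m a b (f : Hom a b) : idm b \oc f = f.
Proof. by case: HP. Qed.

Lemma compm1 a b (f : Hom a b) : f \oc idm a = f.
Proof. by case: HP => _ []. Qed.

Lemma compA a b c d (h : Hom c d) (g : Hom b c) (f : Hom a b) :
  h \oc (g \oc f) = h \oc g \oc f.
Proof. by case: HP => _ [_ []]. Qed.

Lemma compDl a b c (g g' : Hom b c) (f : Hom a b) :
  (g + g') \oc f = g \oc f + g' \oc f.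
Proof. by case: HP => _ [_ [_ []]]. Qed.

Lemma compDr a b c (g : Hom b c) (f f' : Hom a b) :
  g \oc (f + f') = g \oc f + g \oc f'.
Proof. by case: HP => _ [_ [_ []]]. Qed.

Lemma comp0m a b c (f : Hom a b) : (0 : Hom b c) \oc f = 0.
Proof. by apply: (@addrI _ (0 \oc f)); rewrite -compDl !addr0. Qed.

Lemma compm0 a b c (g : Hom b c) : g \oc (0 : Hom a b) = 0.
Proof. by apply: (@addrI _ (g \oc 0)); rewrite -compDr !addr0. Qed.

Lemma compBl a b c (g g' : Hom b c) (f : Hom a b) :
  (g - g') \oc f = g \oc f - g' \oc f.
Proof. by apply/eqP; rewrite eq_sym subr_eq -compDl subrK. Qed.

Lemma compBr a b c (g : Hom b c) (f f' : Hom a b) :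
  g \oc (f - f') = g \oc f - g \oc f'.
Proof. by apply/eqP; rewrite eq_sym subr_eq -compDr subrK. Qed.

Lemma comp_eq2 a b c d (g : Hom b c) (f : Hom a b) (k : Hom a c) (h : Hom d a) :
  g \oc f = k -> g \oc (f \oc h) = k \oc h.
Proof. by move=> <-; rewrite compA. Qed.

Lemma comp_eq3 a b c d e (g : Hom c d) (f : Hom b c) (f0 : Hom a b)
    (k : Hom a d) (h : Hom e a) :
  g \oc (f \oc f0) = k -> g \oc (f \oc (f0 \oc h)) = k \oc h.
Proof. by move=> <-; rewrite !compA. Qed.

Lemma mono_of_comp0 a b (f : Hom a b) :
  (forall x (g : Hom x a), f \oc g = 0 -> g = 0) -> is_mono C f.
Proof.
move=> f0 x g h e.
by apply/eqP; rewrite -subr_eq0 (f0 _ (g - h)) // compBr e subrr.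
Qed.

Lemma epi_of_comp0 a b (f : Hom a b) :
  (forall x (g : Hom b x), g \oc f = 0 -> g = 0) -> is_epi C f.
Proof.
move=> f0 x g h e.
by apply/eqP; rewrite -subr_eq0 (f0 _ (g - h)) // compBl e subrr.
Qed.

Lemma split_mono a b (f : Hom a b) (g : Hom b a) :
  g \oc f = idm a -> is_mono C f.
Proof. by move=> gf x h h' e; rewrite -[h]comp1m -[h']comp1m -gf -!compA e. Qed.

Lemma split_epi a b (f : Hom a b) (g : Hom b a) :
  f \oc g = idm b -> is_epi C f.
Proof. by move=> fg x h h' e; rewrite -[h]compm1 -[h']compm1 -fg !compA e. Qed.

Lemma iso_mono a b (f : Hom a b) : is_iso C f -> is_mono C f.
Proof. by case=> g [gf _]; apply: split_mono gf. Qed.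

Lemma mono_comp a b c (g : Hom b c) (f : Hom a b) :
  is_mono C g -> is_mono C f -> is_mono C (g \oc f).
Proof. by move=> mg mf x h h'; rewrite -!compA => /mg; apply: mf. Qed.

Lemma epi_of_iso_comp a b c (g : Hom b c) (f : Hom a b) :
  is_iso C g -> is_epi C (g \oc f) -> is_epi C f.
Proof.
case=> g' [g'g _] egf x h h' e.
have e' : h \oc g' = h' \oc g'.
  by apply: egf; rewrite -!compA (compA g') g'g comp1m.
by rewrite -[h]compm1 -[h']compm1 -g'g !compA e'.
Qed.

Lemma linv_rinv_eq a b (f : Hom a b) (g h : Hom b a) :
  g \oc f = idm a -> f \oc h = idm b -> g = h.
Proof. by move=> gf fh; rewrite -[g]compm1 -fh compA gf comp1m. Qed.

Lemma is_zero_obj_iso a b (f : Hom a b) :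
  is_iso C f -> is_zero_obj C a -> is_zero_obj C b.
Proof.
by case=> g [_ fg] a0; rewrite /is_zero_obj -fg -[g]comp1m a0 comp0m compm0.
Qed.

End Preadditive.

(* [arewrite e], for [e : g \oc f = k] with [f] a composite of at most two
   morphisms, rewrites [g \oc f] into [k] anywhere inside a composite, after
   normalizing all composites to be right-nested. *)
Tactic Notation "arewrite" open_constr(e) :=
  rewrite -?compA;
  first [rewrite e | rewrite (comp_eq2 _ e) | rewrite (comp_eq3 _ e)];
  rewrite -?compA.

Section Monoidal.
Context {C : MonCat} {HP : is_preadditive_category C} {HM : is_monoidal C}
  {HT : tensor_additive C}.
Implicit Types (a b c d x : Ob C).

Lemma tensh1 a b : idm a ⊗ idm b = idm (tens a b).
Proof. by case: HM. Qed.

Lemma tensh_comp a b c a' b' c' (f : Hom a b) (f' : Hom b c) (g : Hom a' b')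
    (g' : Hom b' c') :
  (f' \oc f) ⊗ (g' \oc g) = f' ⊗ g' \oc f ⊗ g.
Proof. by case: HM => _ []. Qed.

Lemma associnvK a b c : assoc a b c \oc associnv a b c = idm _.
Proof. by case: HM => _ [_ [/(_ a b c) []]]. Qed.

Lemma assocK a b c : associnv a b c \oc assoc a b c = idm _.
Proof. by case: HM => _ [_ [/(_ a b c) []]]. Qed.

Lemma lunitinvK a : lunit a \oc lunitinv a = idm _.
Proof. by case: HM => _ [_ [_ [/(_ a) []]]]. Qed.

Lemma lunitK a : lunitinv a \oc lunit a = idm _.
Proof. by case: HM => _ [_ [_ [/(_ a) []]]]. Qed.

Lemma runitinvK a : runit a \oc runitinv a = idm _.
Proof. by case: HM => _ [_ [_ [_ [/(_ a) []]]]]. Qed.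

Lemma runitK a : runitinv a \oc runit a = idm _.
Proof. by case: HM => _ [_ [_ [_ [/(_ a) []]]]]. Qed.

Lemma assoc_nat a b c a' b' c' (f : Hom a a') (g : Hom b b') (h : Hom c c') :
  assoc a' b' c' \oc (f ⊗ g) ⊗ h = f ⊗ (g ⊗ h) \oc assoc a b c.
Proof. by case: HM => _ [_ [_ [_ [_ []]]]]. Qed.

Lemma lunit_nat a b (f : Hom a b) : lunit b \oc idm unitO ⊗ f = f \oc lunit a.
Proof. by case: HM => _ [_ [_ [_ [_ [_ []]]]]]. Qed.

Lemma runit_nat a b (f : Hom a b) : runit b \oc f ⊗ idm unitO = f \oc runit a.
Proof. by case: HM => _ [_ [_ [_ [_ [_ [_ []]]]]]]. Qed.

Lemma pentagon a b c d :
  idm a ⊗ assoc b c d \oc (assoc a (tens b c) d \oc assoc a b c ⊗ idm d)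
  = assoc a b (tens c d) \oc assoc (tens a b) c d.
Proof. by rewrite compA; case: HM => _ [_ [_ [_ [_ [_ [_ [_ []]]]]]]]. Qed.

Lemma triangle a b : idm a ⊗ lunit b \oc assoc a unitO b = runit a ⊗ idm b.
Proof. by case: HM => _ [_ [_ [_ [_ [_ [_ [_ [_ ]]]]]]]]. Qed.

Lemma tensh1D x a b (f g : Hom a b) : idm x ⊗ (f + g) = idm x ⊗ f + idm x ⊗ g.
Proof. by case: HT. Qed.

Lemma tenshD1 x a b (f g : Hom a b) : (f + g) ⊗ idm x = f ⊗ idm x + g ⊗ idm x.
Proof. by case: HT. Qed.

Lemma tensh10 x a b : idm x ⊗ (0 : Hom a b) = 0.
Proof. by apply: (@addrI _ (idm x ⊗ 0)); rewrite -tensh1D !addr0. Qed.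

Lemma tensh01 x a b : (0 : Hom a b) ⊗ idm x = 0.
Proof. by apply: (@addrI _ (0 ⊗ idm x)); rewrite -tenshD1 !addr0. Qed.

Lemma tensh1_comp x a b c (f : Hom a b) (g : Hom b c) :
  idm x ⊗ (g \oc f) = idm x ⊗ g \oc idm x ⊗ f.
Proof. by rewrite -tensh_comp comp1m. Qed.

Lemma tensh_comp1 x a b c (f : Hom a b) (g : Hom b c) :
  (g \oc f) ⊗ idm x = g ⊗ idm x \oc f ⊗ idm x.
Proof. by rewrite -tensh_comp comp1m. Qed.

Lemma tensh_splitl a b c d (f : Hom a b) (g : Hom c d) :
  f ⊗ g = f ⊗ idm d \oc idm a ⊗ g.
Proof. by rewrite -tensh_comp comp1m compm1. Qed.

Lemma tensh_splitr a b c d (f : Hom a b) (g : Hom c d) :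
  f ⊗ g = idm b ⊗ g \oc f ⊗ idm c.
Proof. by rewrite -tensh_comp comp1m compm1. Qed.

Lemma tensh_interchange a b c d (f : Hom a b) (g : Hom c d) :
  idm b ⊗ g \oc f ⊗ idm c = f ⊗ idm d \oc idm a ⊗ g.
Proof. by rewrite -tensh_splitl -tensh_splitr. Qed.

Lemma associnv_nat a b c a' b' c' (f : Hom a a') (g : Hom b b') (h : Hom c c') :
  associnv a' b' c' \oc f ⊗ (g ⊗ h) = (f ⊗ g) ⊗ h \oc associnv a b c.
Proof.
rewrite -[LHS]compm1 -(associnvK a b c) compA -(compA _ _ (assoc a b c)).
by rewrite -assoc_nat !compA assocK comp1m.
Qed.

Lemma eq_comp_assoc x a b c (p : Hom (tens (tens a b) c) x)
    (q : Hom (tens a (tens b c)) x) :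
  p = q \oc assoc a b c <-> q = p \oc associnv a b c.
Proof.
split=> ->; first by rewrite -compA associnvK compm1.
by rewrite -compA assocK compm1.
Qed.

Lemma lunitinv_nat a b (f : Hom a b) :
  idm unitO ⊗ f \oc lunitinv a = lunitinv b \oc f.
Proof.
apply: (split_mono (lunitK b)).
by rewrite compA lunit_nat -compA lunitinvK compA lunitinvK comp1m compm1.
Qed.

Lemma runitinv_nat a b (f : Hom a b) :
  f ⊗ idm unitO \oc runitinv a = runitinv b \oc f.
Proof.
apply: (split_mono (runitK b)).
by rewrite compA runit_nat -compA runitinvK compA runitinvK comp1m compm1.
Qed.

Lemma lunit_tensh_inj a b (f g : Hom a b) :
  idm unitO ⊗ f = idm unitO ⊗ g -> f = g.
Proof.
by move=> e; apply: (split_epi (lunitinvK a)); rewrite -!lunit_nat e.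
Qed.

Lemma runit_tensh_inj a b (f g : Hom a b) :
  f ⊗ idm unitO = g ⊗ idm unitO -> f = g.
Proof.
by move=> e; apply: (split_epi (runitinvK a)); rewrite -!runit_nat e.
Qed.

Lemma triangle_inv a b :
  runit a ⊗ idm b \oc associnv a unitO b = idm a ⊗ lunit b.
Proof. by rewrite -triangle -compA associnvK compm1. Qed.

Lemma pentagon_inv a b c d :
  associnv a b c ⊗ idm d
    \oc (associnv a (tens b c) d \oc idm a ⊗ associnv b c d)
  = associnv (tens a b) c d \oc associnv a b (tens c d).
Proof.
apply: (linv_rinv_eq (f := assoc a b (tens c d) \oc assoc (tens a b) c d)).
  rewrite -pentagon.
  arewrite (esym (tensh1_comp a (assoc b c d) (associnv b c d))).
  rewrite assocK tensh1 comp1m; arewrite (assocK a (tens b c) d).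
  by rewrite comp1m -tensh_comp1 assocK tensh1.
by rewrite -compA (compA (assoc (tens a b) c d)) associnvK comp1m associnvK.
Qed.

Lemma lunit_tens a b : lunit (tens a b) \oc assoc unitO a b = lunit a ⊗ idm b.
Proof.
apply: lunit_tensh_inj.
have assoc2K : assoc unitO (tens unitO a) b \oc assoc unitO unitO a ⊗ idm b
    \oc (associnv unitO unitO a ⊗ idm b \oc associnv unitO (tens unitO a) b)
    = idm _.
  rewrite -!compA (compA (_ ⊗ _)) -tensh_comp1.
  by rewrite associnvK tensh1 comp1m associnvK.
apply: (split_epi assoc2K).
rewrite tensh1_comp; arewrite (pentagon unitO unitO a b).
arewrite (triangle unitO (tens a b)); rewrite -[idm (tens a b)]tensh1.
arewrite (esym (assoc_nat (runit unitO) (idm a) (idm b))).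
rewrite -triangle tensh_comp1.
by arewrite (assoc_nat (idm unitO) (lunit a) (idm b)).
Qed.

Lemma runit_tens a b : runit (tens a b) = idm a ⊗ runit b \oc assoc a b unitO.
Proof.
apply: runit_tensh_inj; apply: (split_mono (assocK a b unitO)); symmetry.
rewrite tensh_comp1; arewrite (assoc_nat (idm a) (runit b) (idm unitO)).
rewrite -triangle tensh1_comp; arewrite (pentagon a b unitO unitO).
arewrite (esym (assoc_nat (idm a) (idm b) (lunit unitO))).
by rewrite tensh1 triangle.
Qed.

Lemma pentagon_mixed a b c d :
  assoc a b c ⊗ idm d \oc associnv (tens a b) c d
  = associnv a (tens b c) d
    \oc (idm a ⊗ associnv b c d \oc assoc a b (tens c d)).
Proof.
apply: (split_epi (assocK a b (tens c d))); rewrite -!compA associnvK compm1.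
rewrite -pentagon_inv.
arewrite (esym (tensh_comp1 d (associnv a b c) (assoc a b c))).
by rewrite associnvK tensh1 comp1m.
Qed.

Lemma runitinv_tens a b :
  runitinv (tens a b) = associnv a b unitO \oc idm a ⊗ runitinv b.
Proof.
apply: (linv_rinv_eq (runitK (tens a b))).
rewrite runit_tens -compA (compA (assoc _ _ _)) associnvK comp1m.
by rewrite -tensh1_comp runitinvK tensh1.
Qed.
End Monoidal.

(* [- ⊗ R] is left adjoint to [- ⊗ X]; [dual_curry] and [dual_uncurry] are the
   two directions of the bijection Hom(P, S ⊗ X) ~ Hom(P ⊗ R, S). *)
Section DualPair.
Context {C : MonCat} {HP : is_preadditive_category C} {HM : is_monoidal C}
  {HT : tensor_additive C}.
Variables (X R : Ob C) (ev : Hom (tens X R) unitO).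
Variable coev : Hom unitO (tens R X).
Hypothesis dual_XR : dual_pair C X R ev coev.

Definition dual_curry P S (k : Hom P (tens S X)) : Hom (tens P R) S :=
  runit S \oc (idm S ⊗ ev \oc (assoc S X R \oc k ⊗ idm R)).

Definition dual_uncurry P S (h : Hom (tens P R) S) : Hom P (tens S X) :=
  h ⊗ idm X \oc (associnv P R X \oc (idm P ⊗ coev \oc runitinv P)).

Lemma dual_curry_nat P S T (g : Hom S T) (k : Hom P (tens S X)) :
  dual_curry (g ⊗ idm X \oc k) = g \oc dual_curry k.
Proof.
rewrite /dual_curry tensh_comp1; arewrite (assoc_nat g (idm X) (idm R)).
rewrite tensh1; arewrite (tensh_interchange g ev).
by arewrite (runit_nat g).
Qed.

Lemma dual_curryK P S (k : Hom P (tens S X)) : dual_uncurry (dual_curry k) = k.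
Proof.
case: dual_XR => _ zigzag; rewrite -!compA in zigzag.
rewrite /dual_curry /dual_uncurry !tensh_comp1.
arewrite (esym (associnv_nat _ _ _)); rewrite tensh1.
arewrite (esym (tensh_interchange _ _)); arewrite (runitinv_nat _).
rewrite runitinv_tens -[idm (tens S X)]tensh1.
arewrite (esym (associnv_nat _ _ _)).
arewrite (esym (pentagon_inv _ _ _ _)).
arewrite (esym (tensh_comp1 X (associnv S X R) (assoc S X R))).
rewrite associnvK tensh1 comp1m.
arewrite (esym (associnv_nat _ _ _)); arewrite (triangle_inv _ _).
do 4 arewrite (esym (tensh1_comp _ _ _)).
by rewrite zigzag tensh1 comp1m.
Qed.

Lemma dual_coev0 : coev = 0 -> is_zero_obj C R.
Proof.
case: dual_XR => zigzag _ coev0.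
by rewrite /is_zero_obj -zigzag coev0 tensh01 compm0 comp0m.
Qed.

Lemma tensr_mono S T (i : Hom S T) : is_mono C i -> is_mono C (i ⊗ idm X).
Proof.
move=> mono_i P g h e.
rewrite -(dual_curryK g) -(dual_curryK h); congr dual_uncurry.
by apply: mono_i; rewrite -!dual_curry_nat e.
Qed.
End DualPair.

(* The reverse of C, with tensor product (a, b) |-> b ⊗ a: right A-modules in C
   are the left A-modules in [rev C]. *)
Definition rev (C : MonCat) : MonCat :=
  {| Ob := Ob C; Hom := @Hom C; idm := @idm C; comp := @comp C;
     tens a b := tens b a; tensh a b c d f g := tensh g f; unitO := unitO;
     assoc a b c := associnv c b a; associnv a b c := assoc c b a;
     lunit := @runit C; lunitinv := @runitinv C;
     runit := @lunit C; runitinv := @lunitinv C |}.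

Section Reversal.
Context {C : MonCat}.

#[export] Instance rev_preadditive {HP : is_preadditive_category C} :
  is_preadditive_category (rev C) := HP.

#[export] Instance rev_abelian {HA : is_abelian C} : is_abelian (rev C) := HA.

#[export] Instance rev_tensor_additive {HT : tensor_additive C} :
  tensor_additive (rev C).
Proof. by case: HT. Qed.

#[export] Instance rev_monoidal {HP : is_preadditive_category C}
  {HM : is_monoidal C} {HT : tensor_additive C} : is_monoidal (rev C).
Proof.
do ![split] => *; rewrite /= -?compA;
  by [ exact: tensh1 | exact: tensh_comp | exact: assocK | exact: associnvK
     | exact: runitinvK | exact: runitK | exact: lunitinvK | exact: lunitK
     | exact: associnv_nat | exact: runit_nat | exact: lunit_nat
     | exact: pentagon_inv | exact: triangle_inv ].
Qed.

Lemma dual_pair_rev L R ev coev :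
  dual_pair (rev C) L R ev coev <-> dual_pair C R L ev coev.
Proof. by split=> [[]|[]]. Qed.

#[export] Instance rev_rigid {HR : is_rigid C} : is_rigid (rev C).
Proof.
move=> X; have [[L [ev [coev ?]]] [R [ev' [coev' ?]]]] := HR X.
by split; [exists R, ev', coev' | exists L, ev, coev]; apply/dual_pair_rev.
Qed.
End Reversal.

Lemma tensl_mono {C : MonCat} {HP : is_preadditive_category C}
    {HM : is_monoidal C} {HT : tensor_additive C}
    (L X : Ob C) ev coev (S T : Ob C) (i : Hom S T) :
  dual_pair C L X ev coev -> is_mono C i -> is_mono C (idm X ⊗ i).
Proof.
by move=> /(@dual_pair_rev C X L) dual_XL; apply: (tensr_mono dual_XL).
Qed.

#[export] Instance abelian_preadditive {C : MonCat} {HA : is_abelian C} :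
  is_preadditive_category C.
Proof. by case: HA. Qed.

Section Abelian.
Context {C : MonCat} {HA : is_abelian C}.
Implicit Types (a b : Ob C).

Lemma kernel_mono k a b (i : Hom k a) (f : Hom a b) :
  is_kernel C i f -> is_mono C i.
Proof.
case=> fi0 univ; apply: mono_of_comp0 => x g ig0.
have [t [_ t_uniq]] := univ x 0 (compm0 x f).
by rewrite -(t_uniq g) ?(t_uniq 0) ?compm0.
Qed.

Lemma mono_epi_iso a b (i : Hom a b) : is_mono C i -> is_epi C i -> is_iso C i.
Proof.
move=> mono_i epi_i.
have [c [f [if0 univ]]] : exists c (f : Hom c a), is_cokernel C i f.
  by case: HA => _ [_ [_ [_ [_ [_ epi_normal]]]]]; apply: epi_normal.
have f0 : idm a \oc f = 0.
  by rewrite comp1m; apply: mono_i; rewrite if0 compm0.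
have [r [ri _]] := univ a (idm a) f0.
exists r; split => //.
by apply: epi_i; rewrite -compA ri compm1 comp1m.
Qed.

Lemma unit_simple_mono : simple_obj C unitO ->
  forall b (f : Hom unitO b), f <> 0 -> is_mono C f.
Proof.
move=> [_ unit_simple] b f f_neq0.
have [k [i ker_i]] : exists k (i : Hom k unitO), is_kernel C i f.
  by case: HA => _ [_ [_ [kernel _]]]; apply: kernel.
case: (unit_simple k i (kernel_mono ker_i)) => [k0 | [j [_ ij]]].
  apply: mono_of_comp0 => x g fg0.
  have [t [it _]] := ker_i.2 x g fg0.
  by rewrite -it -[t]comp1m k0 comp0m compm0.
by case: f_neq0; rewrite -[f]compm1 -ij compA ker_i.1 comp0m.
Qed.
End Abelian.

Section Rigid.
Context {C : MonCat} {HA : is_abelian C} {HM : is_monoidal C}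
  {HT : tensor_additive C} {HR : is_rigid C}.
Hypothesis unit_simple : simple_obj C unitO.

Lemma tensr_faithful X S T (f : Hom S T) :
  ~ is_zero_obj C X -> f ⊗ idm X = 0 -> f = 0.
Proof.
move=> X_neq0 fX0.
have [[L [ev [coev dual_LX]]] _] := HR X.
have mono_coev : is_mono C coev.
  by apply: unit_simple_mono => // /(dual_coev0 dual_LX).
have [[T' [evT [coevT dual_T]]] _] := HR T.
have fXL0 : f ⊗ idm (tens X L) = 0.
  apply: (split_epi (associnvK S X L)).
  by rewrite comp0m -tensh1 -assoc_nat fX0 tensh01 compm0.
(* f ⊗ coev factors both through f ⊗ idm (X ⊗ L) = 0 and through the
   monomorphism idm T ⊗ coev. *)
apply: runit_tensh_inj; rewrite tensh01; apply: (tensl_mono dual_T mono_coev).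
by rewrite compm0 -tensh_splitr tensh_splitl fXL0 comp0m.
Qed.

Lemma tensr_reflects_epi X S T (f : Hom S T) :
  ~ is_zero_obj C X -> is_epi C (f ⊗ idm X) -> is_epi C f.
Proof.
move=> X_neq0 epi_fX; apply: epi_of_comp0 => Q c cf0.
apply: (tensr_faithful X_neq0); apply: epi_fX.
by rewrite -tensh_comp1 cf0 !tensh01 !comp0m.
Qed.
End Rigid.

Arguments lm_obj {C A}.
Arguments lm_act {C A}.
Arguments is_lmod {C A}.
Arguments lmod_hom {C A}.
Arguments lmod_mono {C A}.
Arguments lmod_iso {C A}.
Arguments lmod_zero {C A}.

Section LeftModules.
Context {C : MonCat} {HA : is_abelian C} {HM : is_monoidal C}
  {HT : tensor_additive C} {HR : is_rigid C}.
Variable A : Alg C.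
Hypothesis alg_A : is_algebra C A.
Local Notation a := (alg_obj C A).
Local Notation mul := (alg_mul C A).
Local Notation one := (alg_unit C A).
Implicit Types (L M N : LMod C A).

Definition lmod_tensr N (X : Ob C) : LMod C A :=
  {| lm_obj := tens (lm_obj N) X;
     lm_act := lm_act N ⊗ idm X \oc associnv a (lm_obj N) X |}.

Lemma is_lmod_regular : is_lmod (regular_lmod C A).
Proof. by case: alg_A => ? []. Qed.

Lemma is_lmod_tensr N X : is_lmod N -> is_lmod (lmod_tensr N X).
Proof.
case=> act_assoc act_unit; split=> /=.
  rewrite -!compA -[idm (tens _ X)]tensh1.
  arewrite (associnv_nat mul (idm (lm_obj N)) (idm X)).
  arewrite (esym (tensh_comp1 _ _ _)).
  rewrite act_assoc !tensh_comp1 -!compA; symmetry.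
  by rewrite tensh1_comp; arewrite (associnv_nat _ _ _); rewrite pentagon_mixed.
rewrite -!compA -[idm (tens _ X)]tensh1; arewrite (associnv_nat _ _ _).
arewrite (esym (tensh_comp1 _ _ _)); rewrite act_unit.
apply: (split_epi (associnvK unitO (lm_obj N) X)).
by rewrite -compA assocK compm1 lunit_tens.
Qed.

Lemma is_lmod_free X : is_lmod (free_lmod C A X).
Proof. exact: is_lmod_tensr is_lmod_regular. Qed.

Lemma lmod_hom_tensr N M X (f : Hom (lm_obj N) (lm_obj M)) :
  lmod_hom N M f -> lmod_hom (lmod_tensr N X) (lmod_tensr M X) (f ⊗ idm X).
Proof.
rewrite /lmod_hom /= => f_hom.
rewrite compA -tensh_comp1 f_hom tensh_comp1 -!compA.
by rewrite associnv_nat.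
Qed.

Lemma lmod_hom_comp L M N (g : Hom (lm_obj M) (lm_obj N))
    (f : Hom (lm_obj L) (lm_obj M)) :
  lmod_hom M N g -> lmod_hom L M f -> lmod_hom L N (g \oc f).
Proof.
rewrite /lmod_hom => g_hom f_hom.
by rewrite -compA f_hom compA g_hom tensh1_comp compA.
Qed.

Lemma lmod_iso_of_iso M N (f : Hom (lm_obj M) (lm_obj N)) :
  lmod_hom M N f -> is_iso C f -> lmod_iso M N f.
Proof.
move=> f_hom [g [gf fg]]; exists g; split => //.
apply: (split_mono gf); rewrite /lmod_hom compA fg comp1m.
by rewrite -[lm_act N]compm1 -tensh1 -fg tensh1_comp !compA -f_hom -compA.
Qed.

Definition lmod_extend N {P} (k : Hom P (lm_obj N)) :
    Hom (tens a P) (lm_obj N) :=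
  lm_act N \oc idm a ⊗ k.

Lemma lmod_hom_extend N P (k : Hom P (lm_obj N)) :
  is_lmod N -> lmod_hom (free_lmod C A P) N (lmod_extend k).
Proof.
case=> act_assoc _; rewrite /lmod_hom /lmod_extend /=.
arewrite (tensh_interchange mul k); rewrite -[idm (tens a a)]tensh1.
rewrite compA act_assoc -!compA; arewrite (assoc_nat (idm a) (idm a) k).
by rewrite associnvK compm1 tensh1_comp.
Qed.

Lemma lmod_extendK N P (k : Hom P (lm_obj N)) :
  is_lmod N -> lmod_extend k \oc (one ⊗ idm P \oc lunitinv P) = k.
Proof.
case=> _ act_unit; rewrite /lmod_extend -!compA.
arewrite (tensh_interchange one k).
by rewrite compA act_unit lunitinv_nat compA lunitinvK comp1m.
Qed.

Lemma lmod_hom_extend_comp N M P (i : Hom (lm_obj N) (lm_obj M))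
    (k : Hom P (lm_obj N)) :
  lmod_hom N M i -> i \oc lmod_extend k = lmod_extend (i \oc k).
Proof.
by move=> i_hom; rewrite /lmod_extend compA i_hom -compA -tensh1_comp.
Qed.

Lemma lmod_mono_of_mono N M (i : Hom (lm_obj N) (lm_obj M)) :
  is_mono C i -> lmod_mono N M i.
Proof. by move=> i_mono P _ g h _ _; apply: i_mono. Qed.

Lemma lmod_mono_mono N M (i : Hom (lm_obj N) (lm_obj M)) :
  is_lmod N -> lmod_hom N M i -> lmod_mono N M i -> is_mono C i.
Proof.
move=> lmod_N i_hom i_mono P g h ig_ih.
rewrite -(lmod_extendK g lmod_N) -(lmod_extendK h lmod_N); congr (_ \oc _).
apply: (i_mono _ (is_lmod_free P) _ _ (lmod_hom_extend g lmod_N)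
  (lmod_hom_extend h lmod_N)).
by rewrite !lmod_hom_extend_comp // ig_ih.
Qed.

Hypothesis unit_simple : simple_obj C unitO.

Lemma simple_lmod_regular :
  (exists M, simple_lmod C A M) -> left_essential_division C A ->
  simple_lmod C A (regular_lmod C A).
Proof.
move=> [M [lmod_M [M_neq0 M_simple]]] [a_neq0 essential].
split; first exact: is_lmod_regular.
split=> // N lmod_N i i_hom i_lmono.
have i_mono := lmod_mono_mono lmod_N i_hom i_lmono.
have [X [phi [phi_hom [psi [_ [psi_phi phi_psi]]]]]] := essential M lmod_M.
have phi_iso : is_iso C phi by exists psi.
have X_neq0 : ~ is_zero_obj C X.
  move=> X0; apply/M_neq0/(is_zero_obj_iso phi_iso).
  by rewrite /is_zero_obj /= -tensh1 X0 tensh10.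
have [_ [R [ev [coev dual_XR]]]] := HR X.
pose j := phi \oc i ⊗ idm X.
have j_mono : lmod_mono (lmod_tensr N X) M j.
  apply: lmod_mono_of_mono.
  exact: mono_comp (iso_mono phi_iso) (tensr_mono dual_XR i_mono).
have j_hom : lmod_hom (lmod_tensr N X) M j.
  exact: lmod_hom_comp phi_hom (lmod_hom_tensr X i_hom).
have [NX0 | [k [_ [_ jk]]]] :=
  M_simple _ (is_lmod_tensr X lmod_N) j j_hom j_mono.
  by left; apply: (tensr_faithful unit_simple X_neq0); rewrite tensh1.
right; apply: lmod_iso_of_iso i_hom (mono_epi_iso i_mono _).
apply: (tensr_reflects_epi unit_simple X_neq0).
by apply: (epi_of_iso_comp phi_iso); apply: (split_epi jk).
Qed.
End LeftModules.

Arguments rm_obj {C A}.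
Arguments rm_act {C A}.
Arguments is_rmod {C A}.
Arguments rmod_hom {C A}.
Arguments rmod_mono {C A}.
Arguments rmod_iso {C A}.
Arguments rmod_zero {C A}.

Section RightModulesAsLeft.
Context {C : MonCat} {HP : is_preadditive_category C} {HM : is_monoidal C}.
Variable A : Alg C.

Definition alg_rev : Alg (rev C) :=
  Build_Alg (rev C) (alg_obj C A) (alg_mul C A) (alg_unit C A).

Definition lmod_rev (M : RMod C A) : LMod (rev C) alg_rev :=
  Build_LMod (rev C) alg_rev (rm_obj M) (rm_act M).

Lemma is_algebra_rev : is_algebra C A -> is_algebra (rev C) alg_rev.
Proof.
by case=> mul_assoc [? ?]; split=> /=; first exact/eq_comp_assoc.
Qed.

Lemma is_lmod_rev M : is_lmod (lmod_rev M) <-> is_rmod M.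
Proof. by split=> -[act_assoc act_unit]; split=> //=; apply/eq_comp_assoc. Qed.

Lemma lmod_mono_rev M N (i : Hom (rm_obj M) (rm_obj N)) :
  lmod_mono (lmod_rev M) (lmod_rev N) i <-> rmod_mono M N i.
Proof.
split=> [i_mono P /is_lmod_rev | i_mono [P act]]; first exact: i_mono.
by move=> /(is_lmod_rev (Build_RMod C A P act)); apply: i_mono.
Qed.

Lemma simple_lmod_rev M :
  simple_lmod (rev C) alg_rev (lmod_rev M) <-> simple_rmod C A M.
Proof.
split=> -[/is_lmod_rev lmod_M [M_neq0 M_simple]]; do 2!split => //.
  by move=> N /is_lmod_rev lmod_N i i_hom /(lmod_mono_rev i); apply: M_simple.
move=> [N act] /(is_lmod_rev (Build_RMod C A N act)) lmod_N i i_hom.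
by move/(lmod_mono_rev (M := Build_RMod C A N act) i); apply: M_simple.
Qed.

Lemma left_essential_rev :
  right_essential_division C A -> left_essential_division (rev C) alg_rev.
Proof.
move=> [a_neq0 essential]; split=> // -[N act].
by move=> /(is_lmod_rev (Build_RMod C A N act)); apply: essential.
Qed.
End RightModulesAsLeft.

Theorem proposition3p4 (C : MonCat) (A : Alg C) :
  rigid_abelian_monoidal C ->
  simple_obj C unitO ->
  is_algebra C A ->
  ~ is_zero_obj C (alg_obj C A) ->
  ((exists M : LMod C A, simple_lmod C A M) ->
     left_essential_division C A -> left_simplistic_division C A) /\
  ((exists M : RMod C A, simple_rmod C A M) ->
     right_essential_division C A -> right_simplistic_division C A).
Proof.
move=> [HA [HM [HT HR]]] unit_simple alg_A A_neq0.
split=> [simple_M essential | [M /simple_lmod_rev simple_M]].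
  by split; last exact: simple_lmod_regular.
move=> /left_essential_rev essential; split=> //.
apply/(simple_lmod_rev (regular_rmod C A)).
apply: (simple_lmod_regular (is_algebra_rev alg_A)) => //.
by exists (lmod_rev M).
Qed.
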